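(* Let $\varphi$ be a profile over a finite set $N$ that is qualifying consecutive (QC) with respect to a linear order $\rhd$ of $N$. Then the individuals in $f^{\mathrm{CSR}}(\varphi,N)$ are consecutive in $\rhd$ (i.e., $f^{\mathrm{CSR}}(\varphi,N)$ is an interval of $\rhd$, possibly empty).
   Context: A profile over a finite set $N$ of individuals is a map $\varphi:N\times N\to\{0,1\}$; $\varphi(a,a')=1$ means $a$ qualifies $a'$. For a linear order $\rhd=(a_1,\dots,a_n)$ of $N$, $\varphi$ is QC with respect to $\rhd$ if for every $a\in N$ the set $\{a_x:\varphi(a,a_x)=1\}$ is a set of consecutive elements of $\rhd$ (all 1s in the vector $(\varphi(a,a_1),\dots,\varphi(a,a_n))$ are consecutive). Consensus-start-respecting rule: for $T\subseteq N$, let $K_0(\varphi,T)=\{a\in T:\varphi(a',a)=1\text{ for all }a'\in T\}$ and for $\ell\ge1$, $K_\ell(\varphi,T)=K_{\ell-1}(\varphi,T)\cup\{a\in T:\exists a'\in K_{\ell-1}(\varphi,T),\ \varphi(a',a)=1\}$; $f^{\mathrm{CSR}}(\varphi,T)$ is the limit (stable value) of this sequence. *)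

From mathcomp Require Import all_boot.
Set Implicit Arguments. Unset Strict Implicit. Unset Printing Implicit Defensive.

Definition profile (N : finType) := N -> N -> bool.

(* A linear order of N, given as the list (a_1,...,a_n) enumerating N
   without repetition. *)
Definition linear_order (N : finType) (s : seq N) : Prop :=
  uniq s /\ forall a : N, a \in s.

Definition consecutive (N : finType) (s : seq N) (S : N -> Prop) : Prop :=
  forall (x0 : N) (i j k : nat), i <= j -> j <= k -> k < size s ->
    S (nth x0 s i) -> S (nth x0 s k) -> S (nth x0 s j).

(* QC: for every a, the set of individuals qualified by a is consecutive. *)
Definition QC (N : finType) (phi : profile N) (s : seq N) : Prop :=
  forall a : N, consecutive s (fun x => phi a x).

Fixpoint CSR_K (N : finType) (phi : profile N) (T : {set N}) (l : nat) : {set N} :=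
  match l with
  | 0 => [set a in T | [forall a', (a' \in T) ==> phi a' a]]
  | l'.+1 => CSR_K phi T l' :|:
             [set a in T | [exists a', (a' \in CSR_K phi T l') && phi a' a]]
  end.

(* f^CSR(phi, T): the limit of the increasing sequence K_l, i.e. its union. *)
Definition f_CSR (N : finType) (phi : profile N) (T : {set N}) : N -> Prop :=
  fun a => exists l : nat, a \in CSR_K phi T l.

From mathcomp Require Import all_boot.

Set Implicit Arguments.
Unset Strict Implicit.
Unset Printing Implicit Defensive.

(* Every individual of K_0 is qualified by everybody, so every qualification
   set contains K_0. Hence, once K_0 is nonempty, each K_l is a union of
   intervals sharing a common point of K_0, and so is their union f^CSR; a
   union of intervals with a common point is an interval. If K_0 is empty,
   every K_l is empty. *)

Section Consecutive.
Variables (N : finType) (s : seq N).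

Lemma consecutive_ext (S T : N -> Prop) :
  (forall y, S y <-> T y) -> consecutive s S -> consecutive s T.
Proof.
move=> eqST cS x0 i j k hij hjk hk /eqST Si /eqST Sk.
by apply/eqST; apply: (cS x0 i j k).
Qed.

Lemma consecutive_bigcap (I : Type) (F : I -> N -> Prop) :
  (forall t, consecutive s (F t)) -> consecutive s (fun y => forall t, F t y).
Proof. by move=> cF x0 i j k hij hjk hk Fi Fk t; apply: (cF t x0 i j k). Qed.

Lemma consecutive_bigcup_anchor (I : Type) (F : I -> N -> Prop) (x : N) :
  x \in s -> (forall t, consecutive s (F t)) -> (forall t y, F t y -> F t x) ->
  consecutive s (fun y => exists t, F t y).
Proof.
move=> xs cF anchor x0 i j k hij hjk hk [t Fi] [u Fk].
have xs_pos : index x s < size s by rewrite index_mem.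
have nth_x : nth x0 s (index x s) = x by rewrite nth_index.
have [jx | xj] := leqP j (index x s).
- exists t; apply: (cF t x0 i j (index x s)) => //.
  by rewrite nth_x; exact: anchor Fi.
- exists u; apply: (cF u x0 (index x s) j k) => //; first exact: ltnW.
  by rewrite nth_x; exact: anchor Fk.
Qed.

End Consecutive.

Section CSR.
Variables (N : finType) (phi : profile N).
Local Notation K := (CSR_K phi [set: N]).

Lemma CSR_K0P b : reflect (forall a, phi a b) (b \in K 0).
Proof.
rewrite /= inE in_setT /=.
by apply: (iffP forallP) => H a; move: (H a); rewrite in_setT.
Qed.

Lemma CSR_KSP l b :
  reflect (b \in K l \/ exists2 a, a \in K l & phi a b) (b \in K l.+1).
Proof.
rewrite /= !inE /=; apply: (iffP orP) => -[-> | H]; try by left.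
- by case/existsP: H => a /andP[]; right; exists a.
- by case: H => a Ka phi_ab; right; apply/existsP; exists a; rewrite Ka.
Qed.

Lemma CSR_K0_sub l : {subset K 0 <= K l}.
Proof. by elim: l => [|l IH] // b /IH Kb; apply/CSR_KSP; left. Qed.

Lemma CSR_K0_nonempty l b : b \in K l -> exists x, x \in K 0.
Proof.
elim: l b => [|l IH] b; first by exists b.
by case/CSR_KSP => [/IH | [a /IH]].
Qed.

Variable s : seq N.
Hypothesis qc : QC phi s.

Lemma consecutive_CSR_K l x :
  x \in s -> x \in K 0 -> consecutive s (fun b => b \in K l).
Proof.
move=> xs K0x; elim: l => [|l IH].
  apply: consecutive_ext (consecutive_bigcap qc) => b.
  by split=> /CSR_K0P.
pose F (t : option {a | a \in K l}) b :=
  if t is Some a then phi (val a) b else b \in K l.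
apply: consecutive_ext (consecutive_bigcup_anchor (F := F) xs _ _) => [b|[a|]|[a|] y] //=.
- split=> [[[[a Ka]|] /= Fb] | /CSR_KSP[Kb | [a Ka phi_ab]]].
  + by apply/CSR_KSP; right; exists a.
  + by apply/CSR_KSP; left.
  + by exists None.
  + by exists (Some (exist _ a Ka)).
- by move=> _; apply/CSR_K0P.
- by move=> _; exact: CSR_K0_sub.
Qed.

End CSR.

Theorem lemma2 (N : finType) (phi : profile N) (s : seq N) :
  linear_order s -> QC phi s -> consecutive s (f_CSR phi [set: N]).
Proof.
move=> [_ all_in_s] qc x0 i j k hij hjk hk fi; case: (fi) => l Ki.
have [x K0x] := CSR_K0_nonempty Ki.
have cf : consecutive s (f_CSR phi [set: N]).
  apply: (consecutive_bigcup_anchor (all_in_s x)) => [l' | l' y _].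
  - exact: (consecutive_CSR_K qc (l := l') (all_in_s x) K0x).
  - exact: CSR_K0_sub.
exact: (cf x0 i j k).
Qed.
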